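(* Suppose $z^\star=(v^\star,\lambda^\star,\mu^\star)$ is a fixed point of the SQP-type iteration $z_{k+1}=\pi(z_k)$ and that the second-order sufficient conditions (SOSC), the linear independence constraint qualification (LICQ) and strict complementarity hold at $z^\star$ with respect to the QP subproblem (defined below) with $z_k=z^\star$. Then, in a neighborhood of $z^\star$, the iteration map $z_{k+1}=\pi(z_k)$ is given by the solution to the parametric root-finding problem $R(z;z_k)=0$ with the residual \[ R(z;\bar z)=\begin{bmatrix} W(\bar z)(v-\bar v)+q(\bar z)+\tilde G(\bar v)\tilde\lambda \\ \tilde g(\bar v)+\tilde G(\bar v)^{\top}(v-\bar v)\end{bmatrix}, \] where $\tilde g(v)=(g(v),h_{\mathcal A}(v))$ and $\tilde G(\bar v)=(G(\bar v),H_{\mathcal A}(\bar v))$ collect the equality constraints and the strictly active inequality constraints (index set $\mathcal A$), with associated multipliers $\tilde\lambda=(\lambda,\mu_{\mathcal A})$. Furthermore, the map $\pi$ is differentiable in a neighborhood of $z^\star$.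
   Context: Consider the NLP $\min_{v\in\mathbb R^{n_v}} f(v)$ s.t. $g(v)=0$, $h(v)\le 0$, with $f,g,h$ twice continuously differentiable, and Lagrangian $\mathcal L(v,\lambda,\mu)=f(v)+\lambda^\top g(v)+\mu^\top h(v)$. For a primal-dual iterate $z_k=(v_k,\lambda_k,\mu_k)$, the QP subproblem is $\min_v \tfrac12 (v-v_k)^\top W(z_k)(v-v_k)+q(z_k)^\top(v-v_k)$ s.t. $g(v_k)+G(v_k)^\top(v-v_k)=0$, $h(v_k)+H(v_k)^\top(v-v_k)\le 0$, where $W(z)\succeq 0$ approximates $\nabla_v^2\mathcal L$, and $q(z)\approx\nabla f(v)$ (possibly depending on the dual iterates), $G(v)\approx\nabla g(v)$, $H(v)\approx\nabla h(v)$ are possibly inexact first-order derivatives. The SQP-type iteration is $z_{k+1}=\pi(z_k)$, where $\pi(z_k)$ is the primal-dual solution of this QP, i.e. $z_{k+1}$ satisfies its KKT conditions. *)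

From HB Require Import structures.
From mathcomp Require Import all_boot all_order all_algebra.
From mathcomp Require Import all_classical all_reals all_analysis.
Set Implicit Arguments. Unset Strict Implicit. Unset Printing Implicit Defensive.
Import Order.TTheory GRing.Theory Num.Theory.
Import numFieldNormedType.Exports.
Local Open Scope classical_set_scope.
Local Open Scope ring_scope.

Section Defs.
Variable R : realType.

(* continuously differentiable (finite-dimensional setting: every directional
   derivative x |-> 'd f x u is continuous) *)
Definition C1 (U V : normedModType R) (f : U -> V) : Prop :=
  (forall x, differentiable f x) /\ (forall u : U, continuous (fun x => 'd f x u)).

Definition C2 (U V : normedModType R) (f : U -> V) : Prop :=
  C1 f /\ (forall u : U, C1 (fun x => 'd f x u)).

Variables nv ng nh : nat.

Definition PD := ('cV[R]_nv * 'cV[R]_ng * 'cV[R]_nh)%type.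
Definition pv (z : PD) : 'cV[R]_nv := z.1.1.
Definition plam (z : PD) : 'cV[R]_ng := z.1.2.
Definition pmu (z : PD) : 'cV[R]_nh := z.2.

Variables (W : PD -> 'M[R]_nv) (q : PD -> 'cV[R]_nv)
  (g : 'cV[R]_nv -> 'cV[R]_ng) (h : 'cV[R]_nv -> 'cV[R]_nh)
  (G : 'cV[R]_nv -> 'M[R]_(nv, ng)) (H : 'cV[R]_nv -> 'M[R]_(nv, nh)).

Definition hlin (zb : PD) (v : 'cV[R]_nv) : 'cV[R]_nh :=
  h (pv zb) + (H (pv zb))^T *m (v - pv zb).

Definition QP_KKT (zb z : PD) : Prop :=
  [/\ W zb *m (pv z - pv zb) + q zb + G (pv zb) *m plam z + H (pv zb) *m pmu z = 0,
      g (pv zb) + (G (pv zb))^T *m (pv z - pv zb) = 0,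
      (forall i, hlin zb (pv z) i 0 <= 0),
      (forall i, 0 <= pmu z i 0) &
      (forall i, pmu z i 0 * hlin zb (pv z) i 0 = 0)].

Definition active_set (zs : PD) : {set 'I_nh} :=
  [set i | h (pv zs) i 0 == 0].

Definition QP_LICQ (zs : PD) : Prop :=
  forall (a : 'cV[R]_ng) (b : 'cV[R]_nh),
    (forall i, i \notin active_set zs -> b i 0 = 0) ->
    G (pv zs) *m a + H (pv zs) *m b = 0 -> a = 0 /\ b = 0.

Definition QP_SC (zs : PD) : Prop :=
  forall i, i \in active_set zs -> 0 < pmu zs i 0.

Definition QP_SOSC (zs : PD) : Prop :=
  forall d : 'cV[R]_nv, d != 0 ->
    (G (pv zs))^T *m d = 0 ->
    (forall i, i \in active_set zs -> 0 < pmu zs i 0 -> ((H (pv zs))^T *m d) i 0 = 0) ->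
    (forall i, i \in active_set zs -> pmu zs i 0 = 0 -> ((H (pv zs))^T *m d) i 0 <= 0) ->
    0 < (d^T *m W zs *m d) 0 0.

Definition maskA (A : {set 'I_nh}) (m : 'cV[R]_nh) : 'cV[R]_nh :=
  \col_i (if i \in A then m i 0 else 0).

(* The component tilde g is
   (g, h_A); its h-block is stored in an nh-vector whose entries outside A
   are 0; the multiplier tilde lambda = (lambda, mu_A). *)
Definition resid (A : {set 'I_nh}) (z zb : PD) : PD :=
  (W zb *m (pv z - pv zb) + q zb + G (pv zb) *m plam z
     + H (pv zb) *m maskA A (pmu z),
   g (pv zb) + (G (pv zb))^T *m (pv z - pv zb),
   maskA A (hlin zb (pv z))).

End Defs.

From HB Require Import structures.
From mathcomp Require Import all_boot all_order all_algebra.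
From mathcomp Require Import all_classical all_reals all_analysis.
From mathcomp Require Import lra.
Import Order.TTheory GRing.Theory Num.Theory.
Import numFieldNormedType.Exports.
Local Open Scope classical_set_scope.
Local Open Scope ring_scope.
Set Implicit Arguments. Unset Strict Implicit. Unset Printing Implicit Defensive.

(* For a fixed iterate z_k, the KKT conditions of the QP subproblem with the
   active set A of the QP at z* frozen (constraints in A as equalities,
   multipliers off A set to 0) form a square linear system K(z_k) y = b(z_k)
   whose data depend differentiably on z_k.  SOSC and LICQ make the matrix
   K at z* invertible, so Cramer's rule yields a solution map that is
   differentiable near z* and fixes z*.  By continuity it stays strictly
   complementary near z*, hence it is a KKT point of the QP; convexity of
   the QP (W >= 0) forces all its KKT points to share this complementarity
   pattern, so they all solve the linear system and coincide with it. *)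

Section Cramer.
Variables (R : fieldType) (n : nat).

Definition cramer (K : 'M[R]_n) (b : 'rV[R]_n) : 'rV[R]_n :=
  (\det K)^-1 *: (b *m \adj K).

Lemma cramerP (K : 'M[R]_n) (b y : 'rV[R]_n) :
  \det K != 0 -> y *m K = b <-> y = cramer K b.
Proof.
move=> detK; split=> [<-|->].
  by rewrite /cramer -mulmxA mul_mx_adj mul_mx_scalar scalerA mulVf ?scale1r.
by rewrite /cramer -scalemxAl -mulmxA mul_adj_mx mul_mx_scalar scalerA mulVf ?scale1r.
Qed.

End Cramer.

Section MatrixDifferentiability.
Variables (R : numFieldType) (U : normedModType R).
Implicit Types x : U.

Lemma differentiable_mxP m n (F : U -> 'M[R]_(m, n)) x :
  differentiable F x <-> forall i j, differentiable (fun z => F z i j) x.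
Proof.
split=> [dF i j|dF]; first exact: differentiable_comp dF (differentiable_coord _ i j).
have -> : F = \sum_(i < m) \sum_(j < n) (fun z => F z i j *: delta_mx i j).
  apply/funext => z; rewrite (matrix_sum_delta (F z)) fct_sumE.
  by apply: eq_bigr => i _; rewrite fct_sumE.
apply: differentiable_sum => i; apply: differentiable_sum => j.
exact: differentiableZl.
Qed.

Lemma differentiable_big_sum (I : Type) (r : seq I) (P : pred I) (F : I -> U -> R) x :
  (forall i, differentiable (F i) x) ->
  differentiable (fun z => \sum_(i <- r | P i) F i z) x.
Proof.
move=> dF; rewrite -fct_sumE.
elim/big_ind: _ => [|f g|i _]; [exact: differentiable_cst|exact: differentiableD|exact: dF].
Qed.

Lemma differentiable_big_prod (I : Type) (r : seq I) (P : pred I) (F : I -> U -> R) x :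
  (forall i, differentiable (F i) x) ->
  differentiable (fun z => \prod_(i <- r | P i) F i z) x.
Proof.
move=> dF; rewrite -fct_prodE.
elim/big_ind: _ => [|f g|i _]; [exact: differentiable_cst|exact: differentiableM|exact: dF].
Qed.

Lemma differentiable_mulmx m n p (A : U -> 'M[R]_(m, n)) (B : U -> 'M[R]_(n, p)) x :
  differentiable A x -> differentiable B x -> differentiable (fun z => A z *m B z) x.
Proof.
move=> /differentiable_mxP dA /differentiable_mxP dB; apply/differentiable_mxP => i j.
under eq_fun do rewrite mxE.
by apply: differentiable_big_sum => k; apply: differentiableM.
Qed.

Lemma differentiable_trmx m n (A : U -> 'M[R]_(m, n)) x :
  differentiable A x -> differentiable (fun z => (A z)^T) x.
Proof.
move=> /differentiable_mxP dA; apply/differentiable_mxP => i j.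
by under eq_fun do rewrite mxE.
Qed.

Lemma differentiable_row_mx m n1 n2 (A : U -> 'M[R]_(m, n1)) (B : U -> 'M[R]_(m, n2)) x :
  differentiable A x -> differentiable B x -> differentiable (fun z => row_mx (A z) (B z)) x.
Proof.
move=> /differentiable_mxP dA /differentiable_mxP dB; apply/differentiable_mxP => i j.
rewrite -(splitK j); case: (fintype.split j) => k /=.
  by under eq_fun do rewrite row_mxEl.
by under eq_fun do rewrite row_mxEr.
Qed.

Lemma differentiable_det n (A : U -> 'M[R]_n) x :
  differentiable A x -> differentiable (fun z => \det (A z)) x.
Proof.
move=> /differentiable_mxP dA; apply: differentiable_big_sum => s.
apply: differentiableM; first exact: differentiable_cst.
by apply: differentiable_big_prod => i; apply: dA.
Qed.

Lemma differentiable_adj n (A : U -> 'M[R]_n) x :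
  differentiable A x -> differentiable (fun z => \adj (A z)) x.
Proof.
move=> /differentiable_mxP dA; apply/differentiable_mxP => i j.
under eq_fun do rewrite mxE /cofactor.
apply: differentiableM; first exact: differentiable_cst.
apply: differentiable_det; apply/differentiable_mxP => a b.
by under eq_fun do rewrite !mxE.
Qed.

Lemma differentiable_cramer n (K : U -> 'M[R]_n) (b : U -> 'rV[R]_n) x :
  differentiable K x -> differentiable b x -> \det (K x) != 0 ->
  differentiable (fun z => cramer (K z) (b z)) x.
Proof.
move=> dK db detK; apply/differentiable_mxP => i j; under eq_fun do rewrite mxE.
apply: differentiableM; first exact: differentiableV (differentiable_det dK) detK.
by move: i j; apply/differentiable_mxP/differentiable_mulmx/differentiable_adj.
Qed.

Lemma differentiable_fst (V W : normedModType R) (x : V * W) : differentiable fst x.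
Proof. by apply: linear_differentiable => -[a b]; exact: cvg_fst. Qed.

Lemma differentiable_snd (V W : normedModType R) (x : V * W) : differentiable snd x.
Proof. by apply: linear_differentiable => -[a b]; exact: cvg_snd. Qed.

End MatrixDifferentiability.

Section PrimalDualCoordinates.
Variables (R : realType) (nv ng nh : nat).
Local Notation PDt := (PD R nv ng nh).
Local Notation N := (nv + ng + nh)%N.

Definition rV_of_pd (z : PDt) : 'rV[R]_N :=
  row_mx (row_mx (pv z)^T (plam z)^T) (pmu z)^T.

Definition pd_of_rV (y : 'rV[R]_N) : PDt :=
  ((lsubmx (lsubmx y))^T, (rsubmx (lsubmx y))^T, (rsubmx y)^T).

Lemma rV_of_pdK : cancel rV_of_pd pd_of_rV.
Proof. by case=> [[v l] m]; rewrite /pd_of_rV /rV_of_pd !row_mxKl !row_mxKr !trmxK. Qed.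

Lemma pd_of_rVK : cancel pd_of_rV rV_of_pd.
Proof. by move=> y; rewrite /pd_of_rV /rV_of_pd /pv /plam /pmu /= !trmxK !hsubmxK. Qed.

Lemma rV_of_pd_is_linear : linear rV_of_pd.
Proof.
by move=> a [[v l] m] [[v' l'] m']; rewrite /rV_of_pd !linearP /= !scale_row_mx !add_row_mx.
Qed.
HB.instance Definition _ := GRing.isLinear.Build R _ _ *:%R rV_of_pd rV_of_pd_is_linear.

Lemma pd_of_rV_is_linear : linear pd_of_rV.
Proof. by move=> a y y'; rewrite /pd_of_rV !linearP. Qed.
HB.instance Definition _ := GRing.isLinear.Build R _ _ *:%R pd_of_rV pd_of_rV_is_linear.

Lemma differentiable_pv (z : PDt) : differentiable (@pv R nv ng nh) z.
Proof. exact: differentiable_comp (differentiable_fst _) (differentiable_fst _). Qed.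

Lemma differentiable_plam (z : PDt) : differentiable (@plam R nv ng nh) z.
Proof. exact: differentiable_comp (differentiable_fst _) (differentiable_snd _). Qed.

Lemma differentiable_pmu (z : PDt) : differentiable (@pmu R nv ng nh) z.
Proof. exact: differentiable_snd. Qed.

Lemma differentiable_rV_of_pd (z : PDt) : differentiable rV_of_pd z.
Proof.
apply: differentiable_row_mx; first apply: differentiable_row_mx.
- exact/differentiable_trmx/differentiable_pv.
- exact/differentiable_trmx/differentiable_plam.
- exact/differentiable_trmx/differentiable_pmu.
Qed.

Lemma differentiable_pd_of_rV (y : 'rV[R]_N) : differentiable pd_of_rV y.
Proof.
apply: differentiable_pair; first apply: differentiable_pair; apply: differentiable_trmx.
- exact: differentiable_comp (differentiable_lsubmx _) (differentiable_lsubmx _).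
- exact: differentiable_comp (differentiable_lsubmx _) (differentiable_rsubmx _).
- exact: differentiable_rsubmx.
Qed.

End PrimalDualCoordinates.

Arguments rV_of_pd {R nv ng nh}.
Arguments pd_of_rV {R nv ng nh}.
Arguments rV_of_pdK {R nv ng nh}.
Arguments pd_of_rVK {R nv ng nh}.

Section ActiveMask.
Variables (R : realType) (nh : nat) (A : {set 'I_nh}).
Implicit Types m u : 'cV[R]_nh.

Lemma maskA_is_linear : linear (@maskA R nh A).
Proof.
by move=> a m m'; apply/colP => i; rewrite !mxE; case: (i \in A); rewrite ?mulr0 ?addr0.
Qed.
HB.instance Definition _ := GRing.isLinear.Build R _ _ *:%R (@maskA R nh A) maskA_is_linear.

Lemma maskA_idP m : maskA A m = m <-> forall i, i \notin A -> m i 0 = 0.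
Proof.
split=> [<- i /negbTE iA|m0]; first by rewrite mxE iA.
by apply/colP => i; rewrite mxE; case: ifPn => // /m0 ->.
Qed.

Lemma maskA_eq0P u : maskA A u = 0 <-> forall i, i \in A -> u i 0 = 0.
Proof.
split=> [u0 i iA|u0]; first by have /colP/(_ i) := u0; rewrite !mxE iA.
by apply/colP => i; rewrite !mxE; case: ifP => // /u0.
Qed.

Lemma maskA_add_offA_eq0 u m :
  maskA A u + (m - maskA A m) = 0 <-> maskA A u = 0 /\ maskA A m = m.
Proof.
split=> [E|[-> ->]]; last by rewrite subrr addr0.
have mA : maskA A m = m.
  apply/maskA_idP => i /negbTE iA; move/colP/(_ i): E.
  by rewrite !mxE iA add0r subr0.
by move: E; rewrite mA subrr addr0.
Qed.

Lemma trmx_mul_maskA u m : u^T *m maskA A m = (maskA A u)^T *m m.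
Proof.
apply/matrixP => i j; rewrite !ord1 !mxE; apply: eq_bigr => k _; rewrite !mxE.
by case: (k \in A); rewrite ?mulr0 ?mul0r.
Qed.

Lemma differentiable_maskA m : differentiable (@maskA R nh A) m.
Proof.
apply/differentiable_mxP => i j; under eq_fun do rewrite mxE.
by case: (i \in A); [exact: differentiable_coord|exact: differentiable_cst].
Qed.

End ActiveMask.

Lemma quad_form_stationary (R : comRingType) (n k l p : nat) (M : 'M[R]_n)
    (B : 'M[R]_(n, k)) (C : 'M[R]_(n, l)) (d : 'M[R]_(n, p)) (a : 'M[R]_(k, p))
    (b : 'M[R]_(l, p)) :
  M *m d + B *m a + C *m b = 0 ->
  d^T *m M *m d = - ((B^T *m d)^T *m a) - (C^T *m d)^T *m b.
Proof.
move=> /eqP; rewrite -addrA addr_eq0 => /eqP Md.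
by rewrite -mulmxA Md mulmxN mulmxDr opprD !trmx_mul !trmxK !mulmxA.
Qed.

Section KKTSystem.
Variables (R : realType) (nv ng nh : nat).
Local Notation PDt := (PD R nv ng nh).
Variables (W : PDt -> 'M[R]_nv) (q : PDt -> 'cV[R]_nv)
  (g : 'cV[R]_nv -> 'cV[R]_ng) (h : 'cV[R]_nv -> 'cV[R]_nh)
  (G : 'cV[R]_nv -> 'M[R]_(nv, ng)) (H : 'cV[R]_nv -> 'M[R]_(nv, nh)).
Variable A : {set 'I_nh}.
Local Notation mask := (@maskA R nh A).
Local Notation KKT := (QP_KKT W q g h G H).
Local Notation resid := (resid W q g h G H A).
Implicit Types zb z c : PDt.

Definition vshift zb : PDt := (pv zb, 0, 0).

(* Off [A] the third block row reads [mu_i = 0], which makes the system square. *)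
Definition kkt_op zb c : PDt :=
  (W zb *m pv c + G (pv zb) *m plam c + H (pv zb) *m mask (pmu c),
   (G (pv zb))^T *m pv c,
   mask ((H (pv zb))^T *m pv c) + (pmu c - mask (pmu c))).

Definition kkt_rhs zb : PDt := (- q zb, - g (pv zb), - mask (h (pv zb))).

Lemma kkt_op_is_linear zb : linear (kkt_op zb).
Proof.
move=> a c c'; rewrite /kkt_op /pv /plam /pmu /= !linearP /=.
by congr (_, _, _); apply/colP => i; rewrite !mxE; last case: (i \in A); lra.
Qed.
HB.instance Definition _ zb :=
  GRing.isLinear.Build R _ _ *:%R (kkt_op zb) (kkt_op_is_linear zb).

Lemma kkt_op_sub_rhs zb z :
  kkt_op zb (z - vshift zb) - kkt_rhs zb =
  resid z zb + (0, 0, pmu z - mask (pmu z)).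
Proof.
rewrite /kkt_op /kkt_rhs /resid /vshift /hlin /pv /plam /pmu /= !subr0.
by congr (_, _, _); apply/colP => i; rewrite !mxE; last case: (i \in A); lra.
Qed.

Lemma kkt_op_eq_rhsP zb z :
  kkt_op zb (z - vshift zb) = kkt_rhs zb <->
  resid z zb = 0 /\ forall i, i \notin A -> pmu z i 0 = 0.
Proof.
rewrite -maskA_idP; transitivity (kkt_op zb (z - vshift zb) - kkt_rhs zb = 0).
  by split=> [->|/eqP]; [rewrite subrr|rewrite subr_eq0 => /eqP].
rewrite kkt_op_sub_rhs /resid.
split=> [[E1 E2 /maskA_add_offA_eq0 [E3 mA]]|[[E1 E2 E3] mA]].
  by rewrite !addr0 in E1 E2; rewrite E1 E2 E3.
by rewrite E1 E2 E3 mA subrr; exact: addr0.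
Qed.

Definition kkt_mx zb : 'M[R]_(nv + ng + nh) :=
  lin1_mx (rV_of_pd \o kkt_op zb \o pd_of_rV).

Lemma mul_rV_of_pd_kkt_mx zb c : rV_of_pd c *m kkt_mx zb = rV_of_pd (kkt_op zb c).
Proof. by rewrite mul_rV_lin1 /= rV_of_pdK. Qed.

Definition qp_step zb : PDt :=
  vshift zb + pd_of_rV (cramer (kkt_mx zb) (rV_of_pd (kkt_rhs zb))).

Lemma qp_stepP zb z : \det (kkt_mx zb) != 0 ->
  kkt_op zb (z - vshift zb) = kkt_rhs zb <-> z = qp_step zb.
Proof.
move=> detK; transitivity (rV_of_pd (z - vshift zb) *m kkt_mx zb = rV_of_pd (kkt_rhs zb)).
  by rewrite mul_rV_of_pd_kkt_mx; split=> [->|/(can_inj rV_of_pdK)].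
rewrite cramerP // /qp_step; split=> [<-|->]; first by rewrite rV_of_pdK addrC subrK.
by rewrite addrC addKr pd_of_rVK.
Qed.

Lemma resid_qp_stepP zb z : \det (kkt_mx zb) != 0 ->
  resid z zb = 0 /\ (forall i, i \notin A -> pmu z i 0 = 0) <-> z = qp_step zb.
Proof. by move=> detK; rewrite -kkt_op_eq_rhsP qp_stepP. Qed.

Lemma QP_KKT_cross_complementarity zb z z' :
  (forall d : 'cV[R]_nv, 0 <= (d^T *m W zb *m d) 0 0) -> KKT zb z -> KKT zb z' ->
  forall i, hlin h H zb (pv z) i 0 * pmu z' i 0 = 0.
Proof.
move=> Wpsd [S1 F1 P1 D1 C1] [S2 F2 P2 D2 C2].
set hl := hlin h H zb (pv z); set hl' := hlin h H zb (pv z').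
set d := pv z - pv z'.
have stat : W zb *m d + G (pv zb) *m (plam z - plam z') + H (pv zb) *m (pmu z - pmu z') = 0.
  move: S1 S2; rewrite /d !mulmxBr => /colP S1 /colP S2; apply/colP => i.
  by move: (S1 i) (S2 i); rewrite !mxE; lra.
have feas : (G (pv zb))^T *m d = 0.
  move: F1 F2; rewrite /d !mulmxBr => /colP F1 /colP F2; apply/colP => i.
  by move: (F1 i) (F2 i); rewrite !mxE; lra.
have Hd : (H (pv zb))^T *m d = hl - hl'.
  by rewrite /hl /hl' /hlin /d !mulmxBr; apply/colP => i; rewrite !mxE; lra.
(* [d^T W d] is the sum of the nonpositive cross terms [t i], and [W >= 0]. *)
pose t i := hl i 0 * pmu z' i 0 + hl' i 0 * pmu z i 0.
have t_le0 i : t i <= 0.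
  by have := mulr_le0_ge0 (P1 i) (D2 i); have := mulr_le0_ge0 (P2 i) (D1 i); rewrite /t; lra.
have sum_t : \sum_i t i = (d^T *m W zb *m d) 0 0.
  rewrite (quad_form_stationary stat) feas Hd trmx0 mul0mx oppr0 sub0r !mxE -sumrN.
  by apply: eq_bigr => i _; have := C1 i; have := C2 i; rewrite /t /hl /hl' /hlin !mxE; lra.
have t0 i : t i = 0.
  apply/eqP; rewrite -oppr_eq0; apply/eqP; move: i isT; apply: psumr_eq0P.
    by move=> i _; rewrite oppr_ge0.
  apply/eqP; rewrite sumrN oppr_eq0 eq_le (sumr_le0 _ (fun i _ => t_le0 i)) sum_t.
  exact: Wpsd.
move=> i; have := t0 i; rewrite /t.
by have := mulr_le0_ge0 (P1 i) (D2 i); have := mulr_le0_ge0 (P2 i) (D1 i); lra.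
Qed.

Lemma QP_KKT_resid_eq0 zb z : KKT zb z ->
  (forall i, i \in A -> hlin h H zb (pv z) i 0 = 0) ->
  (forall i, i \notin A -> pmu z i 0 = 0) -> resid z zb = 0.
Proof.
move=> [S F _ _ _] hlA muA; rewrite /resid; have /maskA_idP -> := muA.
by rewrite S F; have /maskA_eq0P -> := hlA.
Qed.

Lemma QP_KKT_of_resid zb z : resid z zb = 0 ->
  (forall i, i \notin A -> pmu z i 0 = 0) ->
  (forall i, i \notin A -> hlin h H zb (pv z) i 0 <= 0) ->
  (forall i, i \in A -> 0 <= pmu z i 0) -> KKT zb z.
Proof.
case=> S F /maskA_eq0P hlA muA hlN muP; move/maskA_idP: (muA) => mA.
rewrite mA in S; split=> // i; case: (boolP (i \in A)) => iA.
- by rewrite hlA.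
- exact: hlN.
- exact: muP.
- by rewrite muA.
- by rewrite hlA ?mulr0.
- by rewrite muA ?mul0r.
Qed.

Lemma hlin_pv zb : hlin h H zb (pv zb) = h (pv zb).
Proof. by rewrite /hlin subrr mulmx0 addr0. Qed.

Definition strictly_complementary zb z : Prop :=
  forall i, (i \notin A -> hlin h H zb (pv z) i 0 < 0) /\ (i \in A -> 0 < pmu z i 0).

Lemma qp_step_spec zb :
  (forall d : 'cV[R]_nv, 0 <= (d^T *m W zb *m d) 0 0) ->
  \det (kkt_mx zb) != 0 -> strictly_complementary zb (qp_step zb) ->
  [/\ KKT zb (qp_step zb),
      (forall z, KKT zb z -> z = qp_step zb) &
      [/\ resid (qp_step zb) zb = 0,
          (forall i, i \notin A -> pmu (qp_step zb) i 0 = 0) &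
          (forall z, resid z zb = 0 -> (forall i, i \notin A -> pmu z i 0 = 0) ->
             z = qp_step zb)]].
Proof.
move=> Wpsd detK sc; have [_ /(_ erefl) [R1 M1]] := @resid_qp_stepP zb (qp_step zb) detK.
have resid_uniq z : resid z zb = 0 -> (forall i, i \notin A -> pmu z i 0 = 0) -> z = qp_step zb.
  by move=> Rz Mz; apply/(@resid_qp_stepP zb z detK).
have KKT1 : KKT zb (qp_step zb).
  apply: QP_KKT_of_resid => // i iA; first exact/ltW/(sc i).1.
  exact/ltW/(sc i).2.
split=> // z KKTz.
have muA i : i \notin A -> pmu z i 0 = 0.
  move=> iA; have /eqP := QP_KKT_cross_complementarity Wpsd KKT1 KKTz i.
  by rewrite mulf_eq0 (lt_eqF ((sc i).1 iA)) => /eqP.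
apply: (resid_uniq _ _ muA); apply: (QP_KKT_resid_eq0 KKTz _ muA) => i iA.
have /eqP := QP_KKT_cross_complementarity Wpsd KKTz KKT1 i.
by rewrite mulf_eq0 (gt_eqF ((sc i).2 iA)) orbF => /eqP.
Qed.

Hypotheses (dW : forall z, differentiable W z) (dq : forall z, differentiable q z)
  (dg : forall v, differentiable g v) (dh : forall v, differentiable h v)
  (dG : forall v, differentiable G v) (dH : forall v, differentiable H v).

Lemma differentiable_kkt_op c x : differentiable (kkt_op^~ c) x.
Proof.
have dGv := differentiable_comp (differentiable_pv x) (dG _).
have dHv := differentiable_comp (differentiable_pv x) (dH _).
have dc m n (C : 'M[R]_(m, n)) := differentiable_cst C x.
apply: differentiable_pair; first apply: differentiable_pair.
- apply: differentiableD; first apply: differentiableD.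
  + exact: differentiable_mulmx (dW x) (dc _ _ _).
  + exact: differentiable_mulmx dGv (dc _ _ _).
  + exact: differentiable_mulmx dHv (dc _ _ _).
- exact: differentiable_mulmx (differentiable_trmx dGv) (dc _ _ _).
- apply: differentiableD; last exact: dc.
  apply: differentiable_comp (differentiable_maskA _ _).
  exact: differentiable_mulmx (differentiable_trmx dHv) (dc _ _ _).
Qed.

Lemma differentiable_kkt_mx x : differentiable kkt_mx x.
Proof.
apply/differentiable_mxP => i j; under eq_fun do rewrite mxE.
have := differentiable_comp (differentiable_kkt_op (pd_of_rV (delta_mx 0 i)) x)
  (differentiable_rV_of_pd _).
by move/differentiable_mxP/(_ 0 j).
Qed.

Lemma differentiable_kkt_rhs x : differentiable kkt_rhs x.
Proof.
have dv := differentiable_pv x.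
apply: differentiable_pair; first apply: differentiable_pair; apply: differentiableN.
- exact: dq.
- exact: differentiable_comp dv (dg _).
- exact: differentiable_comp (differentiable_comp dv (dh _)) (differentiable_maskA _ _).
Qed.

Lemma differentiable_qp_step x : \det (kkt_mx x) != 0 -> differentiable qp_step x.
Proof.
move=> detK; apply: differentiableD.
  apply: differentiable_pair; first apply: differentiable_pair.
  - exact: differentiable_pv.
  - exact: differentiable_cst.
  - exact: differentiable_cst.
apply: differentiable_comp (differentiable_pd_of_rV _).
apply: differentiable_cramer detK; first exact: differentiable_kkt_mx.
exact: differentiable_comp (differentiable_kkt_rhs x) (differentiable_rV_of_pd _).
Qed.

End KKTSystem.

Section SQPFixedPoint.
Variables (R : realType) (nv ng nh : nat).
Local Notation PDt := (PD R nv ng nh).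
Variables (W : PDt -> 'M[R]_nv) (q : PDt -> 'cV[R]_nv)
  (g : 'cV[R]_nv -> 'cV[R]_ng) (h : 'cV[R]_nv -> 'cV[R]_nh)
  (G : 'cV[R]_nv -> 'M[R]_(nv, ng)) (H : 'cV[R]_nv -> 'M[R]_(nv, nh)).
Variable zs : PDt.
Hypotheses (KKTs : QP_KKT W q g h G H zs zs) (SOSC : QP_SOSC W h G H zs)
  (LICQ : QP_LICQ h G H zs) (SC : QP_SC h zs).
Local Notation A := (active_set h zs).
Local Notation kkt_op := (kkt_op W G H A).
Local Notation kkt_mx := (kkt_mx W G H A).
Local Notation qp_step := (qp_step W q g h G H A).

Lemma kkt_op_eq0 c : kkt_op zs c = 0 -> c = 0.
Proof.
case: c => [[d l] m]; rewrite /kkt_op -[pv _]/d -[plam _]/l /=.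
case=> stat feas /maskA_add_offA_eq0 [/maskA_eq0P HdA mA].
rewrite mA in stat.
have d0 : d = 0.
  apply/eqP; apply: contraT => /SOSC /(_ feas) dWd.
  have HdA_le i : i \in A -> ((H (pv zs))^T *m d) i 0 <= 0 by move=> /HdA ->.
  have := dWd (fun i iA _ => HdA i iA) (fun i iA _ => HdA_le i iA).
  rewrite (quad_form_stationary stat) feas -mA trmx_mul_maskA.
  by have /maskA_eq0P -> := HdA; rewrite !trmx0 !mul0mx !mxE; lra.
rewrite d0 mulmx0 add0r in stat.
by move/maskA_idP: mA => /LICQ /(_ stat) [-> ->]; rewrite d0.
Qed.

Lemma det_kkt_mx_neq0 : \det (kkt_mx zs) != 0.
Proof.
apply/negP => /det0P [y]; rewrite -(pd_of_rVK y) mul_rV_of_pd_kkt_mx -(linear0 rV_of_pd).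
by move=> /negP y0 /(can_inj rV_of_pdK) /kkt_op_eq0 c0; apply: y0; rewrite c0.
Qed.

Lemma pmu_fixed_offA i : i \notin A -> pmu zs i 0 = 0.
Proof.
have [_ _ _ _ compl] := KKTs; move=> iA; have /eqP := compl i.
by rewrite hlin_pv mulf_eq0 => /orP [/eqP //|hi]; move: iA; rewrite inE hi.
Qed.

Lemma qp_step_fixed : qp_step zs = zs.
Proof.
apply/esym/(resid_qp_stepP q g h zs det_kkt_mx_neq0); split; last exact: pmu_fixed_offA.
by apply: QP_KKT_resid_eq0 KKTs _ pmu_fixed_offA => i; rewrite inE hlin_pv => /eqP.
Qed.

Lemma strictly_complementary_fixed : strictly_complementary h H A zs zs.
Proof.
have [_ _ hle _ _] := KKTs; move=> i; split=> [iA|/SC //].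
by rewrite lt_neqAle hle andbT hlin_pv; move: iA; rewrite inE.
Qed.

Hypotheses (dW : forall z, differentiable W z) (dq : forall z, differentiable q z)
  (dg : forall v, differentiable g v) (dh : forall v, differentiable h v)
  (dG : forall v, differentiable G v) (dH : forall v, differentiable H v).

Lemma near_qp_step_regular : \forall zb \near zs,
  \det (kkt_mx zb) != 0 /\ strictly_complementary h H A zb (qp_step zb).
Proof.
have dpi := differentiable_qp_step dW dq dg dh dG dH det_kkt_mx_neq0.
have cont_coord (F : PDt -> 'cV[R]_nh) i : differentiable F zs ->
    (fun zb => F zb i 0) @ zs --> F zs i 0.
  by move=> /differentiable_mxP /(_ i 0) dF; exact: differentiable_continuous dF.
near=> zb; split; near: zb.
  apply: cvgr_neq0 det_kkt_mx_neq0.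
  exact: differentiable_continuous (differentiable_det (differentiable_kkt_mx A dW dG dH zs)).
apply: filter_forall => i; have [hlN muP] := strictly_complementary_fixed i.
case: (boolP (i \in A)) => iA.
  have mu_pos : 0 < pmu (qp_step zs) i 0 by rewrite qp_step_fixed; exact: muP.
  near=> zb; split=> [//|_]; near: zb; apply: cvgr_gt mu_pos.
  exact/cont_coord/(differentiable_comp dpi (differentiable_pmu _)).
have hl_neg : hlin h H zs (pv (qp_step zs)) i 0 < 0 by rewrite qp_step_fixed; exact: hlN.
near=> zb; split=> [_|//]; near: zb; apply: cvgr_lt hl_neg.
have dv := differentiable_pv zs.
apply: cont_coord; apply: differentiableD; first exact: differentiable_comp dv (dh _).
apply: differentiable_mulmx; first exact: differentiable_trmx (differentiable_comp dv (dH _)).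
exact: differentiableB (differentiable_comp dpi (differentiable_pv _)) dv.
Unshelve. all: by end_near.
Qed.

End SQPFixedPoint.

Theorem lemma1 (R : realType) (nv ng nh : nat)
  (f : 'cV[R]_nv -> R^o) (g : 'cV[R]_nv -> 'cV[R]_ng) (h : 'cV[R]_nv -> 'cV[R]_nh)
  (W : PD R nv ng nh -> 'M[R]_nv) (q : PD R nv ng nh -> 'cV[R]_nv)
  (G : 'cV[R]_nv -> 'M[R]_(nv, ng)) (H : 'cV[R]_nv -> 'M[R]_(nv, nh))
  (zs : PD R nv ng nh) :
  C2 f -> C2 g -> C2 h ->
  C1 W -> C1 q -> C1 G -> C1 H ->
  (forall (z : PD R nv ng nh) (d : 'cV[R]_nv), 0 <= (d^T *m W z *m d) 0 0) ->
  QP_KKT W q g h G H zs zs ->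
  QP_SOSC W h G H zs -> QP_LICQ h G H zs -> QP_SC h zs ->
  exists pi : PD R nv ng nh -> PD R nv ng nh,
    \forall zb \near zs,
      [/\ QP_KKT W q g h G H zb (pi zb),
          (forall z, QP_KKT W q g h G H zb z -> z = pi zb),
          [/\ resid W q g h G H (active_set h zs) (pi zb) zb = 0,
          (forall i, i \notin active_set h zs -> pmu (pi zb) i 0 = 0) &
          (forall z, resid W q g h G H (active_set h zs) z zb = 0 ->
                     (forall i, i \notin active_set h zs -> pmu z i 0 = 0) ->
                     z = pi zb)] &
          differentiable pi zb].
Proof.
(* [f] enters the QP only through its approximation [q]. *)
move=> _ [[dg _] _] [[dh _] _] [dW _] [dq _] [dG _] [dH _] Wpsd KKTs SOSC LICQ SC.
exists (qp_step W q g h G H (active_set h zs)).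
apply: filterS (near_qp_step_regular KKTs SOSC LICQ SC dW dq dg dh dG dH) => zb [detK sc].
have [KKTb uniqb residb] := qp_step_spec (Wpsd zb) detK sc.
split; [exact: KKTb|exact: uniqb|exact: residb|].
exact: differentiable_qp_step detK.
Qed.
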